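(* Let $(X,d)$ be a metric space and $\mu\colon X^3\to X$ a ternary operation satisfying: (C0)' there is $\kappa_0$ such that $d(\mu(a_1,a_1,a_2),a_1)\leqslant\kappa_0$ and $d(\mu(a_{\sigma(1)},a_{\sigma(2)},a_{\sigma(3)}),\mu(a_1,a_2,a_3))\leqslant\kappa_0$ for all $a_1,a_2,a_3\in X$ and all permutations $\sigma$; (C1)' there is an affine $\rho\colon[0,\infty)\to[0,\infty)$ with $d(\mu(a,b,c),\mu(a',b,c))\leqslant\rho(d(a,a'))$ for all $a,a',b,c\in X$; (C2)' there is $\kappa_4>0$ with $d(\mu(\mu(a,b,c),b,d),\mu(a,b,\mu(c,b,d)))\leqslant\kappa_4$ for all $a,b,c,d\in X$. Let $\varphi=\psi$ be a formal median identity in $p$ variables. Then there is a constant $R=R(\rho,\kappa_0,\kappa_4,\varphi,\psi)$ such that for all $x_1,\ldots,x_p\in X$, $d(\varphi_X(x_1,\ldots,x_p),\psi_X(x_1,\ldots,x_p))\leqslant R$.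
   Context: Let $\Omega_p=\{\alpha_1,\ldots,\alpha_p\}$ and add two symbols $\langle,\rangle$. The set $\mathfrak M_p$ of formal ternary expressions in $p$ variables is the smallest set of finite words over $\Omega_p\cup\{\langle,\rangle\}$ containing each $\alpha_i$ and containing $\langle\varphi_1\varphi_2\varphi_3\rangle$ whenever $\varphi_1,\varphi_2,\varphi_3$ belong to it; every element not in $\Omega_p$ is uniquely of the form $\langle\varphi_1\varphi_2\varphi_3\rangle$. For a set $Y$ with ternary operation $\nu$ and $y_1,\ldots,y_p\in Y$, the realisation $\varphi_Y(y_1,\ldots,y_p)$ is defined inductively by $(\alpha_i)_Y(y_1,\ldots,y_p)=y_i$ and $\langle\varphi_1\varphi_2\varphi_3\rangle_Y=\nu((\varphi_1)_Y,(\varphi_2)_Y,(\varphi_3)_Y)$ (each evaluated at $(y_1,\ldots,y_p)$). An equation $\varphi=\psi$ with $\varphi,\psi\in\mathfrak M_p$ is a formal median identity if $\varphi_Y(y_1,\ldots,y_p)=\psi_Y(y_1,\ldots,y_p)$ for every median algebra $(Y,\nu)$ and all $y_1,\ldots,y_p\in Y$. (A median algebra is a set with a ternary operation $m$ satisfying $m(a,a,b)=a$, full symmetry, and $m(m(a,b,c),b,d)=m(a,b,m(c,b,d))$.) *)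

From Stdlib Require Import Reals.
Open Scope R_scope.

(* Formal ternary expressions in p variables alpha_1..alpha_p
   (variables indexed by {i | i < p}); a word <phi1 phi2 phi3> is Node. *)
Inductive texpr (p : nat) : Type :=
  | Var : {i : nat | (i < p)%nat} -> texpr p
  | Node : texpr p -> texpr p -> texpr p -> texpr p.
Arguments Var {p} _.
Arguments Node {p} _ _ _.

Fixpoint realise {p : nat} {Y : Type} (nu : Y -> Y -> Y -> Y)
  (y : {i : nat | (i < p)%nat} -> Y) (e : texpr p) : Y :=
  match e with
  | Var i => y i
  | Node e1 e2 e3 => nu (realise nu y e1) (realise nu y e2) (realise nu y e3)
  end.

Definition median_algebra (Y : Type) (m : Y -> Y -> Y -> Y) : Prop :=
  (forall a b, m a a b = a) /\
  (forall a b c, m a b c = m a c b /\ m a b c = m b a c /\ m a b c = m b c a /\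
                 m a b c = m c a b /\ m a b c = m c b a) /\
  (forall a b c d, m (m a b c) b d = m a b (m c b d)).

Definition formal_median_identity {p : nat} (phi psi : texpr p) : Prop :=
  forall (Y : Type) (m : Y -> Y -> Y -> Y), median_algebra Y m ->
  forall y : {i : nat | (i < p)%nat} -> Y, realise m y phi = realise m y psi.

Definition metric {X : Type} (d : X -> X -> R) : Prop :=
  (forall x y, 0 <= d x y) /\
  (forall x y, d x y = 0 <-> x = y) /\
  (forall x y, d x y = d y x) /\
  (forall x y z, d x z <= d x y + d y z).

Definition C0' {X : Type} (d : X -> X -> R) (mu : X -> X -> X -> X) (k0 : R) : Prop :=
  forall a1 a2 a3,
    d (mu a1 a1 a2) a1 <= k0 /\
    d (mu a1 a2 a3) (mu a1 a2 a3) <= k0 /\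
    d (mu a1 a3 a2) (mu a1 a2 a3) <= k0 /\
    d (mu a2 a1 a3) (mu a1 a2 a3) <= k0 /\
    d (mu a2 a3 a1) (mu a1 a2 a3) <= k0 /\
    d (mu a3 a1 a2) (mu a1 a2 a3) <= k0 /\
    d (mu a3 a2 a1) (mu a1 a2 a3) <= k0.

Definition C1' {X : Type} (d : X -> X -> R) (mu : X -> X -> X -> X) (rho : R -> R) : Prop :=
  forall a a' b c, d (mu a b c) (mu a' b c) <= rho (d a a').

Definition C2' {X : Type} (d : X -> X -> R) (mu : X -> X -> X -> X) (k4 : R) : Prop :=
  forall a b c e, d (mu (mu a b c) b e) (mu a b (mu c b e)) <= k4.

(* A formal median identity holds in the free median algebra on the variables, which is
   the term algebra modulo the congruence generated by the median axioms; hence phi and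
   psi are related by a finite derivation from those axioms.  Each axiom holds up to
   kappa_0 or kappa_4 in (X, d, mu), symmetry and transitivity of the derivation are
   matched by the metric axioms, and one congruence step costs one application of the
   affine rho, so induction on the derivation bounds d(phi_X, psi_X) uniformly. *)
From Stdlib Require Import Reals Lra RelationClasses Morphisms.
From Stdlib Require Import FunctionalExtensionality PropExtensionality ProofIrrelevance.
From Stdlib Require Import ClassicalEpsilon.
Open Scope R_scope.

Section SetoidQuotient.
Variables (T : Type) (eqv : T -> T -> Prop).
Context {eqv_equiv : Equivalence eqv}.

Definition quotient : Type := {P : T -> Prop | exists t, P = eqv t}.

Definition class_of (t : T) : quotient := exist _ (eqv t) (ex_intro _ t eq_refl).

Lemma quotient_ext (q1 q2 : quotient) : proj1_sig q1 = proj1_sig q2 -> q1 = q2.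
Proof.
  destruct q1 as [P1 H1], q2 as [P2 H2]; simpl. intros <-. f_equal. apply proof_irrelevance.
Qed.

Lemma class_of_eq (t s : T) : class_of t = class_of s <-> eqv t s.
Proof.
  split.
  - intro E. assert (Hs : eqv s s) by reflexivity.
    change (proj1_sig (class_of s) s) in Hs. rewrite <- E in Hs. exact Hs.
  - intro Hts. apply quotient_ext, functional_extensionality. intro u.
    apply propositional_extensionality. simpl. split; intro H.
    + symmetry in Hts. transitivity t; assumption.
    + transitivity s; assumption.
Qed.

Definition repr (q : quotient) : T :=
  proj1_sig (constructive_indefinite_description _ (proj2_sig q)).

Lemma class_of_repr (q : quotient) : class_of (repr q) = q.
Proof.
  unfold repr. destruct constructive_indefinite_description as [t Et]. simpl.
  apply quotient_ext. simpl. now rewrite Et.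
Qed.

Lemma quotient_surj (q : quotient) : exists t, q = class_of t.
Proof. exists (repr q). symmetry. apply class_of_repr. Qed.

Variable f : T -> T -> T -> T.
Context {f_proper : Proper (eqv ==> eqv ==> eqv ==> eqv) f}.

Definition lift3 (a b c : quotient) : quotient := class_of (f (repr a) (repr b) (repr c)).

Lemma lift3_class_of (t1 t2 t3 : T) :
  lift3 (class_of t1) (class_of t2) (class_of t3) = class_of (f t1 t2 t3).
Proof.
  apply class_of_eq. apply f_proper; apply class_of_eq, class_of_repr.
Qed.

End SetoidQuotient.

Section FreeMedianAlgebra.
Variable p : nat.

Implicit Types a b c e t s : texpr p.

Inductive median_eqv : texpr p -> texpr p -> Prop :=
  | median_eqv_refl t : median_eqv t t
  | median_eqv_sym t s : median_eqv t s -> median_eqv s t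
  | median_eqv_trans t s u : median_eqv t s -> median_eqv s u -> median_eqv t u
  | median_eqv_cong1 a a' b c : median_eqv a a' -> median_eqv (Node a b c) (Node a' b c)
  | median_eqv_idem a b : median_eqv (Node a a b) a
  | median_eqv_swap23 a b c : median_eqv (Node a b c) (Node a c b)
  | median_eqv_swap12 a b c : median_eqv (Node a b c) (Node b a c)
  | median_eqv_assoc a b c e :
      median_eqv (Node (Node a b c) b e) (Node a b (Node c b e)).

#[local] Instance median_eqv_Equivalence : Equivalence median_eqv.
Proof. split; red; [apply median_eqv_refl | apply median_eqv_sym | apply median_eqv_trans]. Qed.

Lemma median_eqv_cong2 a b b' c :
  median_eqv b b' -> median_eqv (Node a b c) (Node a b' c).
Proof.
  intro Hb. rewrite median_eqv_swap12, (median_eqv_swap12 a b').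
  now apply median_eqv_cong1.
Qed.

Lemma median_eqv_cong3 a b c c' :
  median_eqv c c' -> median_eqv (Node a b c) (Node a b c').
Proof.
  intro Hc. rewrite median_eqv_swap23, (median_eqv_swap23 a b c').
  now apply median_eqv_cong2.
Qed.

#[local] Instance Node_proper :
  Proper (median_eqv ==> median_eqv ==> median_eqv ==> median_eqv) Node.
Proof.
  intros a a' Ha b b' Hb c c' Hc.
  transitivity (Node a' b c); [now apply median_eqv_cong1|].
  transitivity (Node a' b' c); [now apply median_eqv_cong2|].
  now apply median_eqv_cong3.
Qed.

Definition free_median := quotient (texpr p) median_eqv.

Definition free_median_op : free_median -> free_median -> free_median -> free_median :=
  lift3 (texpr p) median_eqv Node.

Definition median_class (t : texpr p) : free_median := class_of _ median_eqv t.

Lemma median_class_eq (t s : texpr p) :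
  median_class t = median_class s <-> median_eqv t s.
Proof. exact (class_of_eq _ _ t s). Qed.

Lemma median_class_surj (q : free_median) : exists t, q = median_class t.
Proof. exact (quotient_surj _ _ q). Qed.

Lemma free_median_op_median_class (t1 t2 t3 : texpr p) :
  free_median_op (median_class t1) (median_class t2) (median_class t3)
  = median_class (Node t1 t2 t3).
Proof. exact (lift3_class_of _ _ Node t1 t2 t3). Qed.

Lemma free_median_algebra : median_algebra free_median free_median_op.
Proof.
  split; [|split].
  - intros a b.
    destruct (median_class_surj a) as [ta ->], (median_class_surj b) as [tb ->].
    rewrite free_median_op_median_class. apply median_class_eq, median_eqv_idem.
  - intros a b c.
    destruct (median_class_surj a) as [ta ->], (median_class_surj b) as [tb ->],
      (median_class_surj c) as [tc ->].
    rewrite !free_median_op_median_class.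
    repeat split; apply median_class_eq.
    + apply median_eqv_swap23.
    + apply median_eqv_swap12.
    + rewrite median_eqv_swap12. apply median_eqv_swap23.
    + rewrite median_eqv_swap23. apply median_eqv_swap12.
    + rewrite median_eqv_swap12, median_eqv_swap23. apply median_eqv_swap12.
  - intros a b c e.
    destruct (median_class_surj a) as [ta ->], (median_class_surj b) as [tb ->],
      (median_class_surj c) as [tc ->], (median_class_surj e) as [te ->].
    rewrite !free_median_op_median_class. apply median_class_eq, median_eqv_assoc.
Qed.

Lemma realise_free_median (e : texpr p) :
  realise free_median_op (fun i => median_class (Var i)) e = median_class e.
Proof.
  induction e as [i | e1 IH1 e2 IH2 e3 IH3]; simpl; [reflexivity|].
  rewrite IH1, IH2, IH3. apply free_median_op_median_class.
Qed.

Lemma formal_median_identity_median_eqv (phi psi : texpr p) :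
  formal_median_identity phi psi -> median_eqv phi psi.
Proof.
  intro Hid. apply median_class_eq.
  rewrite <- !realise_free_median. apply Hid, free_median_algebra.
Qed.

End FreeMedianAlgebra.

Section CoarseMedianIdentities.
Variables alpha beta k0 k4 : R.
Hypothesis alpha_ge0 : 0 <= alpha.

Definition coarsely_equal {p : nat} (t s : texpr p) : Prop :=
  exists B : R,
    forall (X : Type) (d : X -> X -> R) (mu : X -> X -> X -> X),
      metric d -> C0' d mu k0 -> C1' d mu (fun t => alpha * t + beta) -> C2' d mu k4 ->
      forall x : {i : nat | (i < p)%nat} -> X,
        d (realise mu x t) (realise mu x s) <= B.

Variable p : nat.
Implicit Types t s u a b c e : texpr p.

Lemma coarsely_equal_refl t : coarsely_equal t t.
Proof.
  exists 0. intros X d mu [_ [Hd0 _]] _ _ _ x. right. now apply Hd0.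
Qed.

Lemma coarsely_equal_sym t s : coarsely_equal t s -> coarsely_equal s t.
Proof.
  intros [B HB]. exists B. intros X d mu Hm H0 H1 H2 x.
  rewrite (proj1 (proj2 (proj2 Hm))). now apply HB.
Qed.

Lemma coarsely_equal_trans t s u :
  coarsely_equal t s -> coarsely_equal s u -> coarsely_equal t u.
Proof.
  intros [B1 HB1] [B2 HB2]. exists (B1 + B2). intros X d mu Hm H0 H1 H2 x.
  specialize (HB1 X d mu Hm H0 H1 H2 x). specialize (HB2 X d mu Hm H0 H1 H2 x).
  destruct Hm as [_ [_ [_ Htri]]].
  specialize (Htri (realise mu x t) (realise mu x s) (realise mu x u)). lra.
Qed.

Lemma coarsely_equal_cong1 a a' b c :
  coarsely_equal a a' -> coarsely_equal (Node a b c) (Node a' b c).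
Proof.
  intros [B HB]. exists (alpha * B + beta). intros X d mu Hm H0 H1 H2 x. simpl.
  specialize (HB X d mu Hm H0 H1 H2 x).
  eapply Rle_trans; [apply H1|]. apply Rplus_le_compat_r, Rmult_le_compat_l; assumption.
Qed.

Lemma coarsely_equal_idem a b : coarsely_equal (Node a a b) a.
Proof.
  exists k0. intros X d mu _ H0 _ _ x.
  exact (proj1 (H0 (realise mu x a) (realise mu x b) (realise mu x b))).
Qed.

Lemma coarsely_equal_swap23 a b c : coarsely_equal (Node a b c) (Node a c b).
Proof.
  exists k0. intros X d mu _ H0 _ _ x.
  now destruct (H0 (realise mu x a) (realise mu x c) (realise mu x b)) as (_ & _ & H & _).
Qed.

Lemma coarsely_equal_swap12 a b c : coarsely_equal (Node a b c) (Node b a c).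
Proof.
  exists k0. intros X d mu _ H0 _ _ x.
  now destruct (H0 (realise mu x b) (realise mu x a) (realise mu x c)) as (_ & _ & _ & H & _).
Qed.

Lemma coarsely_equal_assoc a b c e :
  coarsely_equal (Node (Node a b c) b e) (Node a b (Node c b e)).
Proof. exists k4. intros X d mu _ _ _ H2 x. apply H2. Qed.

Lemma median_eqv_coarsely_equal t s : median_eqv p t s -> coarsely_equal t s.
Proof.
  induction 1.
  - apply coarsely_equal_refl.
  - now apply coarsely_equal_sym.
  - eapply coarsely_equal_trans; eassumption.
  - now apply coarsely_equal_cong1.
  - apply coarsely_equal_idem.
  - apply coarsely_equal_swap23.
  - apply coarsely_equal_swap12.
  - apply coarsely_equal_assoc.
Qed.

End CoarseMedianIdentities.

Theorem proposition3p11 :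
  forall (alpha beta k0 k4 : R) (p : nat) (phi psi : texpr p),
    (* rho(t) = alpha t + beta is an affine map [0,oo) -> [0,oo) *)
    0 <= alpha -> 0 <= beta -> 0 < k4 ->
    formal_median_identity phi psi ->
    exists Rc : R,
      forall (X : Type) (d : X -> X -> R) (mu : X -> X -> X -> X),
        metric d ->
        C0' d mu k0 ->
        C1' d mu (fun t => alpha * t + beta) ->
        C2' d mu k4 ->
        forall x : {i : nat | (i < p)%nat} -> X,
          d (realise mu x phi) (realise mu x psi) <= Rc.
Proof.
  intros alpha beta k0 k4 p phi psi alpha_ge0 _ _ Hid.
  apply median_eqv_coarsely_equal; [exact alpha_ge0|].
  now apply formal_median_identity_median_eqv.
Qed.
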